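(* Let $P$ be a classifier on $\mathbb{R}^n$ with infinite pointwise coverage. Then the label set $L_P$ has at most two elements.
   Context: A classifier is a partition $P$ of $\mathbb{R}^n$ together with a distinguished member $R \in P$, the refinement set, which may be empty and which is both meagre and Lebesgue null. The label set is $L_P = P \setminus \{R\}$ and the feature space is $\bigcup L_P$. For $x \in \mathbb{R}^n$, $P(x)$ denotes the member of $P$ containing $x$. An anchor for $x$ is an open ball $A = B(c,r)$ with $x \in A \subseteq P(x)$; its coverage is $r$. The coverage of $P$ at $x$ is $C_P(x) = \sup\{ r : B(c,r) \text{ is an anchor for } x\}$ ($0$ if no anchor exists, $\infty$ if anchors of arbitrarily large radius exist). $P$ has infinite pointwise coverage if $C_P(x) = \infty$ for every $x$ in the feature space. *)

From mathcomp Require Import all_boot all_order all_algebra.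
From mathcomp Require Import all_classical all_reals ereal.
Local Open Scope ereal_scope.
Set Implicit Arguments. Unset Strict Implicit. Unset Printing Implicit Defensive.
Import Order.TTheory GRing.Theory Num.Theory.
Local Open Scope classical_set_scope.
Local Open Scope ring_scope.

Section Defs.
Variables (R : realType) (n : nat).

Definition pt := 'I_n -> R.

Definition edist (x y : pt) : R := Num.sqrt (\sum_(i < n) (x i - y i) ^+ 2).

Definition eball (c : pt) (r : R) : set pt := [set y | edist c y < r].

Definition interior_e (A : set pt) : set pt :=
  [set x | exists r, 0 < r /\ eball x r `<=` A].
Definition closure_e (A : set pt) : set pt :=
  [set x | forall r, 0 < r -> exists y, A y /\ eball x r y].
Definition nowhere_dense_e (A : set pt) : Prop := interior_e (closure_e A) = set0.
Definition meagre (A : set pt) : Prop :=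
  exists F : nat -> set pt, (forall k, nowhere_dense_e (F k)) /\
    A `<=` \bigcup_k F k.

Definition obox (a b : pt) : set pt := [set y | forall i, a i < y i < b i].
Definition bvol (a b : pt) : R := \prod_(i < n) (b i - a i).
Definition lebesgue_null (A : set pt) : Prop :=
  forall eps : R, 0 < eps ->
    exists a b : nat -> pt,
      (forall k i, a k i < b k i) /\
      A `<=` \bigcup_k obox (a k) (b k) /\
      (forall N, \sum_(k < N) bvol (a k) (b k) <= eps).

(* A classifier: a partition P of R^n (its members other than the
   refinement set are nonempty) with a distinguished member Rf, the
   refinement set, which may be empty and is meagre and Lebesgue null. *)
Definition is_classifier (P : set (set pt)) (Rf : set pt) : Prop :=
  (forall A, P A -> A <> Rf -> A !=set0) /\
  (forall x : pt, exists A, P A /\ A x) /\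
  (forall A B, P A -> P B -> A <> B -> A `&` B = set0) /\
  P Rf /\ meagre Rf /\ lebesgue_null Rf.

Definition label_set (P : set (set pt)) (Rf : set pt) : set (set pt) :=
  [set A | P A /\ A <> Rf].

Definition feature_space (P : set (set pt)) (Rf : set pt) : set pt :=
  [set x | exists A, label_set P Rf A /\ A x].

Definition anchor (P : set (set pt)) (x c : pt) (r : R) : Prop :=
  eball c r x /\ exists A, [/\ P A, A x & eball c r `<=` A].

(* coverage C_P(x) = sup of anchor radii (0 if no anchor, +oo if unbounded) *)
Definition coverage (P : set (set pt)) (x : pt) : \bar R :=
  ereal_sup ([set (r%:E) | r in [set r | exists c, anchor P x c r]] `|` [set 0%E]).

Definition infinite_pointwise_coverage (P : set (set pt)) (Rf : set pt) : Prop :=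
  forall x, feature_space P Rf x -> coverage P x = +oo%E.

End Defs.

From mathcomp Require Import all_boot all_order all_algebra.
From mathcomp Require Import all_classical all_reals ereal.
From mathcomp Require Import ring lra.
Set Implicit Arguments. Unset Strict Implicit. Unset Printing Implicit Defensive.
Import Order.TTheory GRing.Theory Num.Theory.
Local Open Scope classical_set_scope.
Local Open Scope ring_scope.

(* Suppose three labels contain points x1, x2, x3 and put
   d = |x2 - x1| + |x3 - x1|.  Infinite coverage lets each label contain, for
   any r > 0, a ball of radius r through its point x_i.  Balls lying in
   different members of the partition are disjoint, so their centres are
   pairwise at least 2r apart, while all three lie within r + d of x1.  But the
   squared pairwise distances of three points sum to at most three times their
   squared distances to any point, which gives 12 r^2 <= 9 (r + d)^2, false
   for r > 7d. *)

Section EuclideanGeometry.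
Variables (R : realType) (n : nat).
Implicit Types (a b : 'I_n -> R) (c x y z : pt R n) (r s t : R).

Definition sqnorm a := \sum_(i < n) a i ^+ 2.
Definition dotp a b := \sum_(i < n) a i * b i.

Lemma sqnorm_ge0 a : 0 <= sqnorm a.
Proof. by apply: sumr_ge0 => i _; apply: sqr_ge0. Qed.

Lemma sqnorm_eq0 a : sqnorm a = 0 -> forall i, a i = 0.
Proof.
move=> /(psumr_eq0P (fun i _ => sqr_ge0 (a i))) a0 i.
by apply/eqP; rewrite -sqrf_eq0 a0.
Qed.

Lemma dotp_sqr_le a b : dotp a b ^+ 2 <= sqnorm a * sqnorm b.
Proof.
have [b0|b_neq0] := eqVneq (sqnorm b) 0.
  have -> : dotp a b = 0.
    by rewrite /dotp big1 // => i _; rewrite (sqnorm_eq0 b0) mulr0.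
  by rewrite b0 mulr0 expr0n.
(* nonnegativity of [sqnorm (a - t b)] at its minimiser [t] *)
have b_gt0 : 0 < sqnorm b by rewrite lt_def b_neq0 sqnorm_ge0.
pose t := dotp a b / sqnorm b.
have ab : dotp a b = t * sqnorm b by rewrite divfK.
have expand : sqnorm (fun i => a i - t * b i) =
    sqnorm a - 2 * t * dotp a b + t ^+ 2 * sqnorm b.
  rewrite /sqnorm /dotp !mulr_sumr -sumrB -big_split /=.
  by apply: eq_bigr => i _; ring.
have := sqnorm_ge0 (fun i => a i - t * b i).
rewrite expand ab; nra.
Qed.

Lemma sqrt_sqnormD a b :
  Num.sqrt (sqnorm (fun i => a i + b i)) <=
  Num.sqrt (sqnorm a) + Num.sqrt (sqnorm b).
Proof.
have expand : sqnorm (fun i => a i + b i) = sqnorm a + 2 * dotp a b + sqnorm b.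
  rewrite /sqnorm /dotp mulr_sumr -!big_split /=.
  by apply: eq_bigr => i _; ring.
have ab : dotp a b <= Num.sqrt (sqnorm a) * Num.sqrt (sqnorm b).
  rewrite -sqrtrM ?sqnorm_ge0 //; apply: (le_trans (ler_norm _)).
  by rewrite -sqrtr_sqr ler_sqrt ?mulr_ge0 ?sqnorm_ge0 ?dotp_sqr_le.
rewrite -[X in _ <= X]ger0_norm ?addr_ge0 ?sqrtr_ge0 //.
rewrite -sqrtr_sqr ler_sqrt ?sqr_ge0 // expand.
have := sqr_sqrtr (sqnorm_ge0 a); have := sqr_sqrtr (sqnorm_ge0 b).
have := sqrtr_ge0 (sqnorm a); have := sqrtr_ge0 (sqnorm b).
nra.
Qed.

Lemma edistC x y : edist x y = edist y x.
Proof. by rewrite /edist; congr Num.sqrt; apply: eq_bigr => i _; ring. Qed.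

Lemma edist_ge0 x y : 0 <= edist x y.
Proof. exact: sqrtr_ge0. Qed.

Lemma edist_triangle x y z : edist x z <= edist x y + edist y z.
Proof.
have -> : edist x z = Num.sqrt (sqnorm (fun i => (x i - y i) + (y i - z i))).
  by congr Num.sqrt; apply: eq_bigr => i _; congr (_ ^+ 2); ring.
exact: sqrt_sqnormD.
Qed.

Definition lerp x y t : pt R n := fun i => x i + t * (y i - x i).

Lemma edist_lerpl x y t : edist x (lerp x y t) = `|t| * edist x y.
Proof.
rewrite /edist -sqrtr_sqr -sqrtrM ?sqr_ge0 //; congr Num.sqrt.
by rewrite mulr_sumr; apply: eq_bigr => i _; rewrite /lerp; ring.
Qed.

Lemma edist_lerpr x y t : edist y (lerp x y t) = `|1 - t| * edist x y.
Proof.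
rewrite /edist -sqrtr_sqr -sqrtrM ?sqr_ge0 //; congr Num.sqrt.
by rewrite mulr_sumr; apply: eq_bigr => i _; rewrite /lerp; ring.
Qed.

(* The smaller ball is centred on the segment from x to c. *)
Lemma eball_shrink c x r s : eball c r x -> 0 < s <= r ->
  exists c', eball c' s x /\ eball c' s `<=` eball c r.
Proof.
rewrite /eball /= => cx /andP[s_gt0 s_le_r].
have r_gt0 : 0 < r by exact: lt_le_trans s_le_r.
pose t := s / r.
have tr : t * r = s by rewrite divfK // gt_eqF.
have t_ge0 : 0 <= t by rewrite divr_ge0 // ltW.
have t_le1 : t <= 1 by rewrite ler_pdivrMr // mul1r.
have := edist_ge0 c x => cx_ge0.
exists (lerp x c t); split => [|y /= c'y].
  by rewrite edistC edist_lerpl ger0_norm // edistC; nra.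
apply: (le_lt_trans (edist_triangle c (lerp x c t) y)).
rewrite edist_lerpr ger0_norm ?subr_ge0 // edistC; nra.
Qed.

Lemma eball_disjoint_le c1 c2 r :
  eball c1 r `&` eball c2 r = set0 -> 2 * r <= edist c1 c2.
Proof.
move=> disj; rewrite leNgt; apply/negP => close.
have half : 1 - 2^-1 = 2^-1 :> R by field.
suff : (eball c1 r `&` eball c2 r) (lerp c1 c2 2^-1) by rewrite disj.
by split; rewrite /eball /= ?edist_lerpl ?edist_lerpr ?half ger0_norm ?invr_ge0 //; lra.
Qed.

(* Equality holds when x is the centroid of c1, c2, c3. *)
Lemma edist3_sqr_le c1 c2 c3 x :
  edist c1 c2 ^+ 2 + edist c2 c3 ^+ 2 + edist c1 c3 ^+ 2 <=
  3 * (edist c1 x ^+ 2 + edist c2 x ^+ 2 + edist c3 x ^+ 2).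
Proof.
rewrite /edist !sqr_sqrtr; try by apply: sumr_ge0 => i _; apply: sqr_ge0.
rewrite -!big_split /= mulr_sumr; apply: ler_sum => i _.
have := sqr_ge0 ((c1 i - x i) + (c2 i - x i) + (c3 i - x i)).
nra.
Qed.

Lemma separated_triple_le c1 c2 c3 x r d : 0 <= d ->
  edist c1 x <= r + d -> edist c2 x <= r + d -> edist c3 x <= r + d ->
  2 * r <= edist c1 c2 -> 2 * r <= edist c2 c3 -> 2 * r <= edist c1 c3 ->
  r <= 7 * d.
Proof.
move=> d_ge0 h1 h2 h3 h12 h23 h13.
have [r_le0|r_gt0] := lerP r 0; first by lra.
have sqr_le (u v : R) : 0 <= u -> u <= v -> u ^+ 2 <= v ^+ 2 by move=> *; nra.
have := edist3_sqr_le c1 c2 c3 x.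
have := sqr_le _ _ (edist_ge0 c1 x) h1; have := sqr_le _ _ (edist_ge0 c2 x) h2.
have := sqr_le _ _ (edist_ge0 c3 x) h3.
have r2_ge0 : 0 <= 2 * r by lra.
have := sqr_le _ _ r2_ge0 h12; have := sqr_le _ _ r2_ge0 h23.
have := sqr_le _ _ r2_ge0 h13.
nra.
Qed.

End EuclideanGeometry.

Lemma no_triple_subset_set2 (T : pointedType) (S : set T) :
  (forall a b c, S a -> S b -> S c -> a <> b -> b <> c -> a <> c -> False) ->
  exists a b, S `<=` [set a; b].
Proof.
move=> no_triple.
have [[a Sa]|S0] := pselect (exists a, S a); last first.
  by exists point, point => x Sx; case: S0; exists x.
have [[b [Sb ba]]|Sa1] := pselect (exists b, S b /\ b <> a); last first.
  exists a, a => x Sx; left; apply: contrapT => xa.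
  by apply: Sa1; exists x.
exists a, b => x Sx; have [|xa] := pselect (x = a); first by left.
have [|xb] := pselect (x = b); first by right.
exfalso; apply: (no_triple a b x Sa Sb Sx) => /esym; [exact: ba|exact: xb|exact: xa].
Qed.

Section Classifier.
Variables (R : realType) (n : nat) (P : set (set (pt R n))) (Rf : set (pt R n)).
Hypothesis P_classifier : is_classifier P Rf.
Hypothesis P_coverage : infinite_pointwise_coverage P Rf.

Lemma coverage_pinfty_anchor x M : coverage P x = +oo%E -> 0 <= M ->
  exists c r, M < r /\ anchor P x c r.
Proof.
move=> cov M_ge0; have : (M%:E < coverage P x)%E by rewrite cov ltry.
case/ereal_sup_gt => _ [[r [c anc] <-]|->]; first by exists c, r.
by rewrite lte_fin; lra.
Qed.

Lemma classifier_member_eq A B x : P A -> P B -> A x -> B x -> A = B.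
Proof.
move=> PA PB Ax Bx; apply: contrapT => AB.
have [_ [_ [disj _]]] := P_classifier.
by move: (disj A B PA PB AB); rewrite -subset0 => /(_ x (conj Ax Bx)).
Qed.

Lemma classifier_eball_dist A B c1 c2 r : P A -> P B -> A <> B ->
  eball c1 r `<=` A -> eball c2 r `<=` B -> 2 * r <= edist c1 c2.
Proof.
move=> PA PB AB c1A c2B; apply: eball_disjoint_le.
rewrite -subset0 => y [/c1A Ay /c2B By].
exact: AB (classifier_member_eq PA PB Ay By).
Qed.

Lemma label_anchor A x r : label_set P Rf A -> A x -> 0 < r ->
  exists c, eball c r x /\ eball c r `<=` A.
Proof.
move=> LA Ax r_gt0.
have Fx : feature_space P Rf x by exists A.
have [c [s [rs [cx [B [PB Bx cB]]]]]] :=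
  coverage_pinfty_anchor (P_coverage Fx) (ltW r_gt0).
have r_le_s : 0 < r <= s by rewrite r_gt0 ltW.
have [c' [c'x c'c]] := eball_shrink cx r_le_s.
exists c'; split => // y /c'c /cB.
by rewrite (classifier_member_eq PB LA.1 Bx Ax).
Qed.

Lemma no_three_labels A1 A2 A3 :
  label_set P Rf A1 -> label_set P Rf A2 -> label_set P Rf A3 ->
  A1 <> A2 -> A2 <> A3 -> A1 <> A3 -> False.
Proof.
move=> L1 L2 L3 A12 A23 A13.
have [nonempty _] := P_classifier.
have [x1 A1x1] := nonempty _ L1.1 L1.2.
have [x2 A2x2] := nonempty _ L2.1 L2.2.
have [x3 A3x3] := nonempty _ L3.1 L3.2.
pose d := edist x2 x1 + edist x3 x1.
have d_ge0 : 0 <= d by rewrite addr_ge0 ?edist_ge0.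
pose r := 7 * d + 1.
have r_gt0 : 0 < r by rewrite /r; lra.
have [c1 [x1c1 c1A1]] := label_anchor L1 A1x1 r_gt0.
have [c2 [x2c2 c2A2]] := label_anchor L2 A2x2 r_gt0.
have [c3 [x3c3 c3A3]] := label_anchor L3 A3x3 r_gt0.
have c1x1 : edist c1 x1 <= r + d by move: x1c1; rewrite /eball /=; lra.
have c2x1 : edist c2 x1 <= r + d.
  apply: (le_trans (edist_triangle c2 x2 x1)); move: x2c2; rewrite /eball /=.
  have := edist_ge0 x3 x1; rewrite /d; lra.
have c3x1 : edist c3 x1 <= r + d.
  apply: (le_trans (edist_triangle c3 x3 x1)); move: x3c3; rewrite /eball /=.
  have := edist_ge0 x2 x1; rewrite /d; lra.
have := separated_triple_le d_ge0 c1x1 c2x1 c3x1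
  (classifier_eball_dist L1.1 L2.1 A12 c1A1 c2A2)
  (classifier_eball_dist L2.1 L3.1 A23 c2A2 c3A3)
  (classifier_eball_dist L1.1 L3.1 A13 c1A1 c3A3).
by rewrite /r; lra.
Qed.

End Classifier.

Theorem lemma3 (R : realType) (n : nat) (P : set (set (pt R n))) (Rf : set (pt R n)) :
  is_classifier P Rf ->
  infinite_pointwise_coverage P Rf ->
  exists a b : set (pt R n), forall A, label_set P Rf A -> A = a \/ A = b.
Proof.
move=> P_classifier P_coverage.
exact: no_triple_subset_set2 (no_three_labels P_classifier P_coverage).
Qed.
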